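(* Let $K$ be a commutative ring with $1$, let $A$ be a $K$-algebra, and let $B$ be an ideal of $A$. If both $B$ and $A/B$ are finitely generated $K$-algebras, then $A$ is a finitely generated $K$-algebra. If both $B$ and $A/B$ are finitely presented $K$-algebras, then $A$ is a finitely presented $K$-algebra.
   Context: A $K$-algebra is a structure that is simultaneously an associative ring (not necessarily with identity) and a $K$-module, with $K$-bilinear multiplication. The free $K$-algebra $K\langle X\rangle$ on a set $X$ is the semigroup ring over $K$ of the free semigroup $X^+$ (no identity). A $K$-algebra is finitely generated if it is isomorphic to $K\langle X\rangle/I$ with $X$ finite and $I$ an ideal; finitely presented if moreover $I$ can be chosen finitely generated as an ideal. *)

From HB Require Import structures.
From mathcomp Require Import all_boot all_order all_algebra.
Set Implicit Arguments. Unset Strict Implicit. Unset Printing Implicit Defensive.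
Import GRing.Theory.
Local Open Scope ring_scope.

(* (Not necessarily unital) associative K-algebras: a K-module with an       *)
(* associative K-bilinear multiplication.  No identity is assumed.           *)
Record kalgType (K : comPzRingType) := KAlgType {
  kalg_sort :> lmodType K;
  kmul : kalg_sort -> kalg_sort -> kalg_sort;
  kmulA : forall x y z, kmul x (kmul y z) = kmul (kmul x y) z;
  kmulDl : forall x y z, kmul (x + y) z = kmul x z + kmul y z;
  kmulDr : forall x y z, kmul x (y + z) = kmul x y + kmul x z;
  kmulZl : forall (k : K) x y, kmul (k *: x) y = k *: kmul x y;
  kmulZr : forall (k : K) x y, kmul x (k *: y) = k *: kmul x y
}.

Definition is_ideal (K : comPzRingType) (A : kalgType K) (B : A -> Prop) :=
  [/\ B 0,
      (forall x y, B x -> B y -> B (x + y)),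
      (forall (k : K) x, B x -> B (k *: x)),
      (forall a x, B x -> B (kmul a x)) &
      (forall a x, B x -> B (kmul x a))].

(* The free K-algebra K<X> on the finite set X = 'I_n, i.e. the semigroup    *)
(* ring of the free semigroup X^+ (nonempty words).  An element is a         *)
(* coefficient function on words (seq 'I_n) with finite support and zero     *)
(* coefficient on the empty word.                                            *)
Definition fpoly (K : comPzRingType) (n : nat) (p : seq 'I_n -> K) : Prop :=
  p [::] = 0 /\ exists s : seq (seq 'I_n), forall w, w \notin s -> p w = 0.

Definition fzero (K : comPzRingType) (n : nat) : seq 'I_n -> K := fun _ => 0.
Definition fadd (K : comPzRingType) (n : nat) (p q : seq 'I_n -> K) :
  seq 'I_n -> K := fun w => p w + q w.
Definition fscale (K : comPzRingType) (n : nat) (k : K) (p : seq 'I_n -> K) :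
  seq 'I_n -> K := fun w => k * p w.
(* Semigroup-ring product: (pq)(w) = sum over w = u v of p(u) q(v); the     *)
(* term with u empty vanishes since p [::] = 0, and v ranges over nonempty   *)
(* suffixes.                                                                  *)
Definition fmul (K : comPzRingType) (n : nat) (p q : seq 'I_n -> K) :
  seq 'I_n -> K :=
  fun w => \sum_(i < size w) p (take i w) * q (drop i w).

Inductive fideal (K : comPzRingType) (n m : nat) (rs : 'I_m -> seq 'I_n -> K)
  : (seq 'I_n -> K) -> Prop :=
| fideal_gen i : fideal rs (rs i)
| fideal_zero : fideal rs (@fzero K n)
| fideal_add p q : fideal rs p -> fideal rs q -> fideal rs (fadd p q)
| fideal_scale (k : K) p : fideal rs p -> fideal rs (fscale k p)
| fideal_mull q p : fpoly q -> fideal rs p -> fideal rs (fmul q p)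
| fideal_mulr q p : fpoly q -> fideal rs p -> fideal rs (fmul p q).

(* Subquotients.  For S a subalgebra-carrier of A and J an ideal predicate,  *)
(* [fhom_onto A S J f] says that f : K<X> -> A takes values in S and induces *)
(* a surjective K-algebra homomorphism K<X> -> S/J (equality taken modulo J).*)
(* Its kernel is {p | J (f p)}.  We use:                                     *)
(*   the algebra A itself     : S = everything, J = {0}                      *)
(*   the ideal B as algebra   : S = B,          J = {0}                      *)
(*   the quotient algebra A/B : S = everything, J = B                        *)
Definition fhom_onto (K : comPzRingType) (A : kalgType K) (S J : A -> Prop)
  (n : nat) (f : (seq 'I_n -> K) -> A) : Prop :=
  [/\ (forall p, fpoly p -> S (f p)),
      (forall p q, fpoly p -> fpoly q -> J (f (fadd p q) - (f p + f q))),
      (forall (k : K) p, fpoly p -> J (f (fscale k p) - k *: f p)),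
      (forall p q, fpoly p -> fpoly q -> J (f (fmul p q) - kmul (f p) (f q))) &
      (forall a, S a -> exists2 p, fpoly p & J (a - f p))].

(* S/J is isomorphic to K<X>/I for some finite X and some ideal I. *)
Definition fg_subquot (K : comPzRingType) (A : kalgType K) (S J : A -> Prop) :=
  exists n (f : (seq 'I_n -> K) -> A), fhom_onto S J f.

(* ... with I moreover finitely generated as an ideal of K<X>. *)
Definition fp_subquot (K : comPzRingType) (A : kalgType K) (S J : A -> Prop) :=
  exists n (f : (seq 'I_n -> K) -> A), fhom_onto S J f /\
    exists m (rs : 'I_m -> seq 'I_n -> K), (forall i, fpoly (rs i)) /\
      (forall p, fpoly p -> (J (f p) <-> fideal rs p)).

Definition kall (K : comPzRingType) (A : kalgType K) : A -> Prop := fun _ => True.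
Definition kzero (K : comPzRingType) (A : kalgType K) : A -> Prop := fun x => x = 0.

Definition fin_gen (K : comPzRingType) (A : kalgType K) := fg_subquot (@kall K A) (@kzero K A).
Definition fin_pres (K : comPzRingType) (A : kalgType K) := fp_subquot (@kall K A) (@kzero K A).
Definition ideal_fin_gen (K : comPzRingType) (A : kalgType K) (B : A -> Prop) :=
  fg_subquot B (@kzero K A).
Definition ideal_fin_pres (K : comPzRingType) (A : kalgType K) (B : A -> Prop) :=
  fp_subquot B (@kzero K A).
Definition quot_fin_gen (K : comPzRingType) (A : kalgType K) (B : A -> Prop) :=
  fg_subquot (@kall K A) B.
Definition quot_fin_pres (K : comPzRingType) (A : kalgType K) (B : A -> Prop) :=
  fp_subquot (@kall K A) B.

From HB Require Import structures.
From mathcomp Require Import all_boot all_order all_algebra ring.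
From Stdlib Require Import ClassicalEpsilon FunctionalExtensionality.
Set Implicit Arguments. Unset Strict Implicit. Unset Printing Implicit Defensive.
Import GRing.Theory.
Local Open Scope ring_scope.

(* Let f : K<X> -> B and g : K<Y> -> A/B be the given presentations, and send
   the letters of X + Y to their images under f and g in A.  Every a in A is
   congruent modulo B to the value of a Y-polynomial, and the difference is a
   value of f: so X + Y generates A.  For a finite presentation, add to the
   relations of B the relations of A/B and the products y x, x y of letters,
   each rewritten as an X-polynomial with the same value (these values lie in
   B).  Modulo these relations the X-polynomials absorb multiplication by any
   letter, so every polynomial is congruent to a Y-part plus an X-part.  If its
   value vanishes, the Y-part maps into B under g, hence is a consequence of the
   relations of A/B and congruent to an X-polynomial too; that X-polynomial
   lies in the kernel of f, i.e. in the ideal of the relations of B. *)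

Section FreeAlgebra.
Variables (K : comPzRingType) (n : nat).
Local Notation poly := (seq 'I_n -> K).
Implicit Types (p q r : poly) (i : 'I_n) (w : seq 'I_n).

Definition letter i : poly := fun w => if w == [:: i] then 1 else 0.
Definition word w : poly := fun v => if v == w then 1 else 0.
Definition fsub p q : poly := fadd p (fscale (-1) q).

Lemma fpoly0 : fpoly (@fzero K n).
Proof. by split => //; exists [::]. Qed.

Lemma fpolyD p q : fpoly p -> fpoly q -> fpoly (fadd p q).
Proof.
move=> [p0 [s sP]] [q0 [t tP]]; split; first by rewrite /fadd p0 q0 addr0.
exists (s ++ t) => w; rewrite mem_cat negb_or /fadd => /andP[/sP-> /tP->].
exact: addr0.
Qed.

Lemma fpolyZ c p : fpoly p -> fpoly (fscale c p).
Proof.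
move=> [p0 [s sP]]; split; first by rewrite /fscale p0 mulr0.
by exists s => w /sP; rewrite /fscale => ->; rewrite mulr0.
Qed.

Lemma fpolyB p q : fpoly p -> fpoly q -> fpoly (fsub p q).
Proof. by move=> Fp Fq; apply/fpolyD/fpolyZ. Qed.

Lemma fpoly_word w : w != [::] -> fpoly (word w).
Proof.
move=> w0; split; first by rewrite /word eq_sym (negbTE w0).
by exists [:: w] => v; rewrite inE /word => /negbTE->.
Qed.

Lemma fpoly_letter i : fpoly (letter i).
Proof. exact: fpoly_word. Qed.

Lemma fmul_nil p q : fmul p q [::] = 0.
Proof. by rewrite /fmul big_ord0. Qed.

(* Only the splitting [z :: w = [:: z] ++ w] contributes. *)
Lemma fmul_letter_cons i q z w : q [::] = 0 ->
  fmul (letter i) q (z :: w) = if z == i then q w else 0.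
Proof.
move=> q0; rewrite /fmul big_ord_recl /= {1}/letter /= mul0r add0r.
case: w => [|y w]; first by rewrite big_ord0; case: (z == i).
rewrite big_ord_recl big1 /= /letter ?eqseq_cons ?andbT => [|k _].
  by case: (z == i); rewrite ?mul1r ?mul0r addr0.
by rewrite eqseq_cons /= andbF mul0r.
Qed.

Lemma fpoly_letterM i q : fpoly q -> fpoly (fmul (letter i) q).
Proof.
move=> [q0 [s sP]]; split; first exact: fmul_nil.
exists (map (cons i) s) => -[_|z w]; rewrite ?fmul_nil // fmul_letter_cons //.
case: eqP => [->|//] iws; apply: sP; apply: contra iws; exact: map_f.
Qed.

Lemma word_cons i j w : word [:: i, j & w] = fmul (letter i) (word (j :: w)).
Proof.
apply: functional_extensionality => -[|z v]; first by rewrite fmul_nil.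
by rewrite fmul_letter_cons // /word eqseq_cons; case: (z == i).
Qed.

Lemma fpoly_ind (P : poly -> Prop) :
  P (@fzero K n) -> (forall i, P (letter i)) ->
  (forall p q, fpoly p -> fpoly q -> P p -> P q -> P (fadd p q)) ->
  (forall c p, fpoly p -> P p -> P (fscale c p)) ->
  (forall i p, fpoly p -> P p -> P (fmul (letter i) p)) ->
  forall p, fpoly p -> P p.
Proof.
move=> P0 Pl PD PZ PlM.
have Pword w : w != [::] -> P (word w).
  elim: w => [//|i [_ _|j w IHw _]]; first exact: Pl.
  by rewrite word_cons; apply: PlM; [apply: fpoly_word | apply: IHw].
move=> p [p0 [s]]; elim: s p p0 => [|w s IHs] p p0 sP.
  by have -> : p = @fzero K n by apply: functional_extensionality => w; apply: sP.
pose p' : poly := fun v => if v == w then 0 else p v.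
have p'0 : p' [::] = 0 by rewrite /p'; case: ifP.
have p'P v : v \notin s -> p' v = 0.
  by rewrite /p'; case: eqP => // /eqP vw vs; apply: sP; rewrite inE negb_or vw.
have [w0|w0] := eqVneq w [::].
  suff -> : p = p' by exact: IHs.
  by apply: functional_extensionality => v; rewrite /p'; case: eqP => // ->; rewrite w0.
have -> : p = fadd (fscale (p w) (word w)) p'.
  apply: functional_extensionality => v; rewrite /fadd /fscale /word /p'.
  by case: eqP => [->|_]; rewrite ?mulr1 ?addr0 ?mulr0 ?add0r.
apply: PD; [exact/fpolyZ/fpoly_word | by split; last exists s | | exact: IHs].
by apply: PZ; [exact: fpoly_word | exact: Pword].
Qed.

Lemma fmul0l q : fmul (@fzero K n) q = @fzero K n.
Proof.
by apply: functional_extensionality => w; rewrite /fmul big1 // => k _; rewrite mul0r.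
Qed.

Lemma fmul0r p : fmul p (@fzero K n) = @fzero K n.
Proof.
by apply: functional_extensionality => w; rewrite /fmul big1 // => k _; rewrite mulr0.
Qed.

Lemma fmulDl p1 p2 q : fmul (fadd p1 p2) q = fadd (fmul p1 q) (fmul p2 q).
Proof.
apply: functional_extensionality => w; rewrite /fmul /fadd -big_split.
by apply: eq_bigr => k _; rewrite mulrDl.
Qed.

Lemma fmulDr p q1 q2 : fmul p (fadd q1 q2) = fadd (fmul p q1) (fmul p q2).
Proof.
apply: functional_extensionality => w; rewrite /fmul /fadd -big_split.
by apply: eq_bigr => k _; rewrite mulrDr.
Qed.

Lemma fmulZl c p q : fmul (fscale c p) q = fscale c (fmul p q).
Proof.
apply: functional_extensionality => w; rewrite /fmul /fscale mulr_sumr.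
by apply: eq_bigr => k _; rewrite mulrA.
Qed.

Lemma fmulZr c p q : fmul p (fscale c q) = fscale c (fmul p q).
Proof.
apply: functional_extensionality => w; rewrite /fmul /fscale mulr_sumr.
by apply: eq_bigr => k _; rewrite mulrCA.
Qed.

Lemma fmul_letterA i p q : p [::] = 0 ->
  fmul (fmul (letter i) p) q = fmul (letter i) (fmul p q).
Proof.
move=> p0; apply: functional_extensionality => -[|z w]; first by rewrite !fmul_nil.
rewrite fmul_letter_cons ?fmul_nil // {1}/fmul big_ord_recl fmul_nil mul0r add0r /=.
under eq_bigr do rewrite fmul_letter_cons //.
by case: (z == i); last by rewrite big1 // => k _; rewrite mul0r.
Qed.

Lemma fpolyM p q : fpoly p -> fpoly q -> fpoly (fmul p q).
Proof.
move=> Fp Fq; elim/fpoly_ind: p / Fp.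
- by rewrite fmul0l; exact: fpoly0.
- by move=> i; exact: fpoly_letterM.
- by move=> p1 p2 _ _ F1 F2; rewrite fmulDl; exact: fpolyD.
- by move=> c p _ Fp; rewrite fmulZl; exact: fpolyZ.
- by move=> i p [p0 _] Fpq; rewrite fmul_letterA //; exact: fpoly_letterM.
Qed.

Lemma fmulA p q r : fpoly p -> q [::] = 0 -> fmul (fmul p q) r = fmul p (fmul q r).
Proof.
move=> Fp q0; elim/fpoly_ind: p / Fp.
- by rewrite !fmul0l.
- by move=> i; rewrite fmul_letterA.
- by move=> p1 p2 _ _ IH1 IH2; rewrite !fmulDl IH1 IH2.
- by move=> c p _ IH; rewrite !fmulZl IH.
- move=> i p [p0 _] IH.
  by rewrite fmul_letterA // fmul_letterA ?fmul_nil // IH fmul_letterA ?fmul_nil.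
Qed.

Local Ltac pointwise_ring :=
  apply: functional_extensionality => w; rewrite /fsub /fadd /fscale ?/fzero; ring.

Lemma fsubrr p : fsub p p = @fzero K n.
Proof. by pointwise_ring. Qed.

Lemma fsubr0 p : fsub p (@fzero K n) = p.
Proof. by pointwise_ring. Qed.

Lemma fsubrK p q : fadd (fsub p q) q = p.
Proof. by pointwise_ring. Qed.

Lemma fadd_fsub p q r : fadd (fsub p q) (fsub q r) = fsub p r.
Proof. by pointwise_ring. Qed.

Lemma fsubD p q p' q' : fsub (fadd p q) (fadd p' q') = fadd (fsub p p') (fsub q q').
Proof. by pointwise_ring. Qed.

Lemma fsubZ c p q : fsub (fscale c p) (fscale c q) = fscale c (fsub p q).
Proof. by pointwise_ring. Qed.

Lemma fmulBl p q r : fmul (fsub p q) r = fsub (fmul p r) (fmul q r).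
Proof. by rewrite fmulDl fmulZl. Qed.

Lemma fmulBr p q r : fmul r (fsub p q) = fsub (fmul r p) (fmul r q).
Proof. by rewrite fmulDr fmulZr. Qed.

End FreeAlgebra.
Arguments letter {K n} i _.

Section IdealCongruence.
Variables (K : comPzRingType) (n m : nat) (rs : 'I_m -> seq 'I_n -> K).
Local Notation poly := (seq 'I_n -> K).
Implicit Types p q r : poly.

Lemma fideal_fpoly p : (forall k, fpoly (rs k)) -> fideal rs p -> fpoly p.
Proof. by move=> Frs; elim=> *; auto using fpoly0, fpolyD, fpolyZ, fpolyM. Qed.

Definition fcong p q := fideal rs (fsub p q).

Lemma fcong_refl p : fcong p p.
Proof. by rewrite /fcong fsubrr; exact: fideal_zero. Qed.

Lemma fcong_trans p q r : fcong p q -> fcong q r -> fcong p r.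
Proof. by rewrite /fcong -(fadd_fsub p q r); exact: fideal_add. Qed.

Lemma fcongD p p' q q' : fcong p p' -> fcong q q' -> fcong (fadd p q) (fadd p' q').
Proof. by rewrite /fcong fsubD; exact: fideal_add. Qed.

Lemma fcongZ c p p' : fcong p p' -> fcong (fscale c p) (fscale c p').
Proof. by rewrite /fcong fsubZ; exact: fideal_scale. Qed.

Lemma fcongMl r p p' : fpoly r -> fcong p p' -> fcong (fmul r p) (fmul r p').
Proof. by rewrite /fcong -fmulBr; exact: fideal_mull. Qed.

Lemma fcongMr r p p' : fpoly r -> fcong p p' -> fcong (fmul p r) (fmul p' r).
Proof. by rewrite /fcong -fmulBl; exact: fideal_mulr. Qed.

Lemma fcong0 p : fcong p (@fzero K n) <-> fideal rs p.
Proof. by rewrite /fcong fsubr0. Qed.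

End IdealCongruence.

Section AlgebraIdeals.
Variables (K : comPzRingType) (A : kalgType K).
Implicit Types x y z : A.

Lemma kmul0l y : kmul 0 y = 0.
Proof. by rewrite -[X in kmul X _](scale0r (0 : A)) kmulZl scale0r. Qed.

Lemma kmul0r x : kmul x 0 = 0.
Proof. by rewrite -[X in kmul _ X](scale0r (0 : A)) kmulZr scale0r. Qed.

Lemma kmulBl x y z : kmul (x - y) z = kmul x z - kmul y z.
Proof. by rewrite kmulDl -scaleN1r kmulZl scaleN1r. Qed.

Lemma kmulBr x y z : kmul x (y - z) = kmul x y - kmul x z.
Proof. by rewrite kmulDr -scaleN1r kmulZr scaleN1r. Qed.

Lemma kmul_sumr (I : Type) (r : seq I) (F : I -> A) x :
  kmul x (\sum_(i <- r) F i) = \sum_(i <- r) kmul x (F i).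
Proof.
elim: r => [|i r IHr]; first by rewrite !big_nil kmul0r.
by rewrite !big_cons kmulDr IHr.
Qed.

Lemma is_ideal_kzero : is_ideal (@kzero K A).
Proof.
rewrite /kzero; split => [//|x y -> ->|c x ->|a x ->|a x ->].
- exact: addr0.
- exact: scaler0.
- exact: kmul0r.
- exact: kmul0l.
Qed.

Definition eqmod (J : A -> Prop) x y := J (x - y).

Lemma eqmod_kzero x y : eqmod (@kzero K A) x y <-> x = y.
Proof.
rewrite /eqmod /kzero; split=> [/eqP|->]; last exact: subrr.
by rewrite subr_eq0 => /eqP.
Qed.

Section Ideal.
Variable J : A -> Prop.
Hypothesis idealJ : is_ideal J.

Lemma ideal0 : J 0. Proof. by case: idealJ. Qed.
Lemma idealD x y : J x -> J y -> J (x + y). Proof. by case: idealJ => _ + _ _ _; apply. Qed.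
Lemma idealZ c x : J x -> J (c *: x). Proof. by case: idealJ => _ _ + _ _; apply. Qed.
Lemma idealN x : J x -> J (- x). Proof. by move/(idealZ (-1)); rewrite scaleN1r. Qed.
Lemma idealMl a x : J x -> J (kmul a x). Proof. by case: idealJ => _ _ _ + _; apply. Qed.
Lemma idealMr a x : J x -> J (kmul x a). Proof. by case: idealJ => _ _ _ _; apply. Qed.

Lemma eqmod_refl x : eqmod J x x.
Proof. by rewrite /eqmod subrr; exact: ideal0. Qed.

Lemma eqmod_sym x y : eqmod J x y -> eqmod J y x.
Proof. by rewrite /eqmod => /idealN; rewrite opprB. Qed.

Lemma eqmod_trans x y z : eqmod J x y -> eqmod J y z -> eqmod J x z.
Proof. by rewrite /eqmod => Jxy /(idealD Jxy); rewrite addrA subrK. Qed.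

Lemma eqmodD x x' y y' : eqmod J x x' -> eqmod J y y' -> eqmod J (x + y) (x' + y').
Proof. by rewrite /eqmod => Jx /(idealD Jx); rewrite opprD addrACA. Qed.

Lemma eqmodZ c x x' : eqmod J x x' -> eqmod J (c *: x) (c *: x').
Proof. by rewrite /eqmod => /(idealZ c); rewrite scalerBr. Qed.

Lemma eqmodM x x' y y' : eqmod J x x' -> eqmod J y y' -> eqmod J (kmul x y) (kmul x' y').
Proof.
rewrite /eqmod => /(idealMr y) Jx /(idealMl x') /(idealD Jx).
by rewrite kmulBl kmulBr addrA subrK.
Qed.

Lemma ideal_eqmod x y : eqmod J x y -> J y -> J x.
Proof. by rewrite /eqmod => Jxy /(idealD Jxy); rewrite subrK. Qed.

End Ideal.
End AlgebraIdeals.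

Section Evaluation.
Variables (K : comPzRingType) (A : kalgType K) (n : nat) (a : 'I_n -> A).
Local Notation poly := (seq 'I_n -> K).
Implicit Types (p q : poly) (s : seq (seq 'I_n)).

(* The value [evw [::] = 0] is irrelevant: polynomials vanish on the empty word. *)
Fixpoint evw (w : seq 'I_n) : A :=
  match w with
  | [::] => 0
  | i :: w' => if w' is [::] then a i else kmul (a i) (evw w')
  end.

Definition fsupp p : seq (seq 'I_n) :=
  epsilon (inhabits [::]) (fun s => forall w, w \notin s -> p w = 0).

Definition ev p : A := \sum_(w <- undup (fsupp p)) p w *: evw w.

Lemma fsuppP p : fpoly p -> forall w, w \notin fsupp p -> p w = 0.
Proof.
case=> _ [s sP].
exact: (epsilon_spec _ (fun s => forall w, w \notin s -> p w = 0) (ex_intro _ s sP)).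
Qed.

Lemma evE p s : fpoly p -> (forall w, w \notin s -> p w = 0) ->
  ev p = \sum_(w <- undup s) p w *: evw w.
Proof.
move=> Fp sP; apply: perm_big_supp; apply: uniq_perm; rewrite ?filter_uniq ?undup_uniq //.
move=> w; rewrite !mem_filter !mem_undup; apply/andP/andP => -[pw0 _]; split => //.
- by apply: contraNT pw0 => /sP->; rewrite scale0r.
- by apply: contraNT pw0 => /(fsuppP Fp)->; rewrite scale0r.
Qed.

Lemma ev0 : ev (@fzero K n) = 0.
Proof. by rewrite (@evE _ [::]) ?big_nil //; exact: fpoly0. Qed.

Lemma evD p q : fpoly p -> fpoly q -> ev (fadd p q) = ev p + ev q.
Proof.
move=> Fp Fq; set s := fsupp p ++ fsupp q.
have pP w : w \notin s -> p w = 0.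
  by rewrite mem_cat negb_or => /andP[/(fsuppP Fp)].
have qP w : w \notin s -> q w = 0.
  by rewrite mem_cat negb_or => /andP[_ /(fsuppP Fq)].
rewrite (evE Fp pP) (evE Fq qP) (@evE _ s); first last.
- by move=> w ws; rewrite /fadd pP ?qP ?addr0.
- exact: fpolyD.
by rewrite -big_split; apply: eq_bigr => w _; rewrite /fadd scalerDl.
Qed.

Lemma evZ c p : fpoly p -> ev (fscale c p) = c *: ev p.
Proof.
move=> Fp; rewrite (evE Fp (fsuppP Fp)) (@evE _ (fsupp p)); first last.
- by move=> w /(fsuppP Fp); rewrite /fscale => ->; rewrite mulr0.
- exact: fpolyZ.
by rewrite scaler_sumr; apply: eq_bigr => w _; rewrite /fscale scalerA.
Qed.

Lemma evB p q : fpoly p -> fpoly q -> ev (fsub p q) = ev p - ev q.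
Proof. by move=> Fp Fq; rewrite evD ?evZ ?scaleN1r //; exact: fpolyZ. Qed.

Lemma ev_letter i : ev (letter i) = a i.
Proof.
rewrite (@evE _ [:: [:: i]]) ?big_seq1 /letter ?eqxx ?scale1r //; first exact: fpoly_letter.
by move=> w; rewrite inE => /negbTE->.
Qed.

Lemma ev_letterM i q : fpoly q -> ev (fmul (letter i) q) = kmul (a i) (ev q).
Proof.
move=> Fq; have [q0 _] := Fq.
rewrite (evE Fq (fsuppP Fq)) (@evE _ (map (cons i) (fsupp q))); first last.
- move=> [_|z w]; rewrite ?fmul_nil // fmul_letter_cons //.
  by case: eqP => [->|//] iw; apply: (fsuppP Fq); apply: contra iw; apply: map_f.
- exact: fpoly_letterM.
rewrite undup_map_inj; last by move=> u v [].
rewrite big_map kmul_sumr; apply: eq_bigr => -[|j w] _; rewrite fmul_letter_cons // eqxx.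
  by rewrite q0 !scale0r kmul0r.
by rewrite kmulZr.
Qed.

Lemma evM p q : fpoly p -> fpoly q -> ev (fmul p q) = kmul (ev p) (ev q).
Proof.
move=> Fp Fq; elim/fpoly_ind: p / Fp.
- by rewrite fmul0l ev0 kmul0l.
- by move=> i; rewrite ev_letterM // ev_letter.
- move=> p1 p2 F1 F2 IH1 IH2.
  by rewrite fmulDl !evD ?IH1 ?IH2 ?kmulDl //; exact: fpolyM.
- by move=> c p Fp IH; rewrite fmulZl !evZ ?IH ?kmulZl //; exact: fpolyM.
- move=> i p Fp IH; have [p0 _] := Fp.
  by rewrite fmul_letterA // !ev_letterM ?IH ?kmulA //; exact: fpolyM.
Qed.

End Evaluation.

Section HomomorphismModIdeal.
Variables (K : comPzRingType) (A : kalgType K) (n : nat) (J : A -> Prop).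
Hypothesis idealJ : is_ideal J.
Local Notation poly := (seq 'I_n -> K).

Definition hom_mod (phi : poly -> A) :=
  [/\ (forall p q, fpoly p -> fpoly q -> eqmod J (phi (fadd p q)) (phi p + phi q)),
      (forall c p, fpoly p -> eqmod J (phi (fscale c p)) (c *: phi p)) &
      (forall p q, fpoly p -> fpoly q -> eqmod J (phi (fmul p q)) (kmul (phi p) (phi q)))].

Lemma fhom_onto_hom_mod S phi : fhom_onto S J phi -> hom_mod phi.
Proof. by case. Qed.

Lemma hom_mod0 phi : hom_mod phi -> J (phi (@fzero K n)).
Proof.
case=> phiD _ _; have := phiD _ _ (@fpoly0 K n) (@fpoly0 K n).
have -> : fadd (@fzero K n) (@fzero K n) = @fzero K n.
  by apply: functional_extensionality => w; rewrite /fadd addr0.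
by rewrite /eqmod opprD addrA subrr add0r => /(idealN idealJ); rewrite opprK.
Qed.

Lemma hom_mod_ev phi p : hom_mod phi -> fpoly p ->
  eqmod J (phi p) (ev (fun i => phi (letter i)) p).
Proof.
move=> phi_hom Fp; have [phiD phiZ phiM] := phi_hom.
elim/fpoly_ind: p / Fp.
- by rewrite ev0 /eqmod subr0; exact: hom_mod0.
- by move=> i; rewrite ev_letter; exact: eqmod_refl.
- move=> p q Fp Fq IHp IHq; rewrite evD //.
  by apply: (eqmod_trans idealJ (phiD _ _ Fp Fq)); apply: eqmodD.
- move=> c p Fp IHp; rewrite evZ //.
  by apply: (eqmod_trans idealJ (phiZ _ _ Fp)); apply: eqmodZ.
- move=> i p Fp IHp; rewrite ev_letterM //.
  apply: (eqmod_trans idealJ (phiM _ _ (fpoly_letter K i) Fp)).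
  by apply: eqmodM => //; apply: eqmod_refl.
Qed.

End HomomorphismModIdeal.

Section Renaming.
Variables (K : comPzRingType) (k N : nat) (s : 'I_k -> 'I_N).
Hypothesis s_inj : injective s.
Implicit Types p q : seq 'I_k -> K.

Fixpoint unrename (w : seq 'I_N) : option (seq 'I_k) :=
  if w is z :: w' then
    if [pick i | s i == z] is Some i then omap (cons i) (unrename w') else None
  else Some [::].

Lemma unrename_map u : unrename (map s u) = Some u.
Proof.
elim: u => //= i u ->; case: pickP => [j /eqP/s_inj -> //|/(_ i)].
by rewrite eqxx.
Qed.

Lemma unrename_some w u : unrename w = Some u -> w = map s u.
Proof.
elim: w u => [|z w IHw] u /=; first by case=> <-.
case: pickP => [j /eqP <-|//]; case E: (unrename w) => [v|] //= [<-].
by rewrite (IHw v).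
Qed.

Definition rename p : seq 'I_N -> K :=
  fun w => if unrename w is Some u then p u else 0.

Lemma rename0 : rename (@fzero K k) = @fzero K N.
Proof. by apply: functional_extensionality => w; rewrite /rename; case: (unrename w). Qed.

Lemma renameD p q : rename (fadd p q) = fadd (rename p) (rename q).
Proof.
apply: functional_extensionality => w; rewrite /rename /fadd.
by case: (unrename w); rewrite ?addr0.
Qed.

Lemma renameZ c p : rename (fscale c p) = fscale c (rename p).
Proof.
apply: functional_extensionality => w; rewrite /rename /fscale.
by case: (unrename w); rewrite ?mulr0.
Qed.

Lemma rename_letter i : rename (letter i) = letter (s i).
Proof.
apply: functional_extensionality => w; rewrite /rename /letter.
case E: (unrename w) => [u|].
  by rewrite (unrename_some E) -[[:: s i]]/(map s [:: i]) (inj_eq (inj_map s_inj)).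
by case: eqP E => // ->; rewrite -[[:: s i]]/(map s [:: i]) unrename_map.
Qed.

Lemma fpoly_rename p : fpoly p -> fpoly (rename p).
Proof.
move=> [p0 [t tP]]; split => //; exists (map (map s) t) => w; rewrite /rename.
case E: (unrename w) => [u|] // wt; apply: tP; apply: contra wt => ut.
by rewrite (unrename_some E) map_f.
Qed.

Lemma rename_letterM i q : q [::] = 0 ->
  rename (fmul (letter i) q) = fmul (letter (s i)) (rename q).
Proof.
move=> q0; apply: functional_extensionality => -[|z w].
  by rewrite fmul_nil /rename /= fmul_nil.
rewrite fmul_letter_cons // /rename /=.
case: pickP => [j /eqP <-|no_i]; case: (unrename w) => [u|] /=.
- by rewrite fmul_letter_cons // (inj_eq s_inj).
- by case: ifP.
- by rewrite eq_sym no_i.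
- by case: ifP.
Qed.

Lemma renameM p q : fpoly p -> fpoly q -> rename (fmul p q) = fmul (rename p) (rename q).
Proof.
move=> Fp Fq; elim/fpoly_ind: p / Fp.
- by rewrite !fmul0l rename0 fmul0l.
- by move=> i; rewrite rename_letterM ?rename_letter //; case: Fq.
- by move=> p1 p2 _ _ IH1 IH2; rewrite fmulDl !renameD IH1 IH2 fmulDl.
- by move=> c p _ IH; rewrite fmulZl !renameZ IH fmulZl.
- move=> i p [p0 _] IH.
  by rewrite fmul_letterA // !rename_letterM ?fmul_nil // IH fmul_letterA.
Qed.

Lemma ev_rename (A : kalgType K) (a : 'I_N -> A) p :
  fpoly p -> ev a (rename p) = ev (a \o s) p.
Proof.
move=> Fp; elim/fpoly_ind: p / Fp.
- by rewrite rename0 !ev0.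
- by move=> i; rewrite rename_letter !ev_letter.
- by move=> p q Fp Fq IHp IHq; rewrite renameD !evD ?IHp ?IHq //; exact: fpoly_rename.
- by move=> c p Fp IHp; rewrite renameZ !evZ ?IHp //; exact: fpoly_rename.
- move=> i p Fp IHp; have [p0 _] := Fp.
  by rewrite rename_letterM // !ev_letterM ?IHp //; exact: fpoly_rename.
Qed.

End Renaming.

Section Extension.
Variables (K : comPzRingType) (A : kalgType K) (B : A -> Prop).
Hypothesis idealB : is_ideal B.
Variables (n m : nat) (f : (seq 'I_n -> K) -> A) (g : (seq 'I_m -> K) -> A).
Hypothesis f_onto : fhom_onto B (@kzero K A) f.
Hypothesis g_onto : fhom_onto (@kall K A) B g.

Local Notation poly := (seq 'I_(n + m) -> K).
Local Notation eX := (@rename K n (n + m) (lshift m)).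
Local Notation eY := (@rename K m (n + m) (@rshift n m)).
Local Notation lX i := (@letter K (n + m) (lshift m i)).
Local Notation lY j := (@letter K (n + m) (@rshift n m j)).

Definition gens (z : 'I_(n + m)) : A :=
  match split z with inl i => f (letter i) | inr j => g (letter j) end.

Local Notation evg := (ev gens).

Lemma gens_lshift i : gens (lshift m i) = f (letter i).
Proof. by rewrite /gens -[lshift m i]/(unsplit (inl i)) unsplitK. Qed.

Lemma gens_rshift j : gens (rshift n j) = g (letter j).
Proof. by rewrite /gens -[rshift n j]/(unsplit (inr j)) unsplitK. Qed.

Lemma eX_letter i : eX (letter i) = lX i.
Proof. exact/rename_letter/lshift_inj. Qed.

Lemma eY_letter j : eY (letter j) = lY j.
Proof. exact/rename_letter/rshift_inj. Qed.

Lemma eXM p q : fpoly p -> fpoly q -> eX (fmul p q) = fmul (eX p) (eX q).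
Proof. exact/renameM/lshift_inj. Qed.

Lemma eYM p q : fpoly p -> fpoly q -> eY (fmul p q) = fmul (eY p) (eY q).
Proof. exact/renameM/rshift_inj. Qed.

Lemma fpoly_eX p : fpoly p -> fpoly (eX p). Proof. exact: fpoly_rename. Qed.
Lemma fpoly_eY p : fpoly p -> fpoly (eY p). Proof. exact: fpoly_rename. Qed.

Lemma B_f p : fpoly p -> B (f p).
Proof. by case: f_onto => + _ _ _ _; apply. Qed.

Lemma evg_eX p : fpoly p -> evg (eX p) = f p.
Proof.
move=> Fp; rewrite ev_rename //; last exact: lshift_inj.
have -> : gens \o lshift m = fun i => f (letter i).
  by apply: functional_extensionality => i; exact: gens_lshift.
apply/esym/eqmod_kzero; apply: hom_mod_ev (is_ideal_kzero A) _ _ _ Fp.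
exact: fhom_onto_hom_mod f_onto.
Qed.

Lemma evg_eY p : fpoly p -> eqmod B (evg (eY p)) (g p).
Proof.
move=> Fp; rewrite ev_rename //; last exact: rshift_inj.
have -> : gens \o @rshift n m = fun j => g (letter j).
  by apply: functional_extensionality => j; exact: gens_rshift.
apply/(eqmod_sym idealB); apply: hom_mod_ev idealB _ _ _ Fp.
exact: fhom_onto_hom_mod g_onto.
Qed.

Lemma evg_fhom_onto : fhom_onto (@kall K A) (@kzero K A) evg.
Proof.
split=> // [p q Fp Fq|c p Fp|p q Fp Fq|x _]; rewrite /kzero.
- by rewrite evD // subrr.
- by rewrite evZ // subrr.
- by rewrite evM // subrr.
have [[_ _ _ _ f_onto'] [_ _ _ _ g_onto']] := (f_onto, g_onto).
have [q Fq xq] := g_onto' x I.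
have /f_onto' [p Fp /eqmod_kzero xE] : B (x - evg (eY q)).
  apply: (ideal_eqmod idealB) xq.
  by rewrite /eqmod opprB addrC addrA addrNK; apply/(eqmod_sym idealB)/evg_eY.
exists (fadd (eY q) (eX p)); first by apply: fpolyD; [exact: fpoly_eY | exact: fpoly_eX].
have -> : x = evg (eY q) + f p by rewrite -xE addrC subrK.
by rewrite evD ?evg_eX ?subrr //; [exact: fpoly_eY | exact: fpoly_eX].
Qed.

Section Presentation.
Variables (mB mQ : nat) (rsB : 'I_mB -> seq 'I_n -> K) (rsQ : 'I_mQ -> seq 'I_m -> K).
Hypothesis fpoly_rsB : forall k, fpoly (rsB k).
Hypothesis fpoly_rsQ : forall k, fpoly (rsQ k).
Hypothesis ker_f : forall p, fpoly p -> (kzero (f p) <-> fideal rsB p).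
Hypothesis ker_g : forall p, fpoly p -> (B (g p) <-> fideal rsQ p).

Definition preim (x : A) : seq 'I_n -> K :=
  epsilon (inhabits (@fzero K n)) (fun p => fpoly p /\ f p = x).

Lemma preimP x : B x -> fpoly (preim x) /\ f (preim x) = x.
Proof.
case: f_onto => _ _ _ _ /(_ x) f_onto' /f_onto' [p Fp /eqmod_kzero px].
exact: (epsilon_spec _ (fun p => fpoly p /\ f p = x) (ex_intro _ p (conj Fp (esym px)))).
Qed.

Local Notation Bindex := ('I_mQ + ('I_m * 'I_n + 'I_n * 'I_m))%type.

Definition Bterm (y : Bindex) : poly :=
  match y with
  | inl k => eY (rsQ k)
  | inr (inl (j, i)) => fmul (lY j) (lX i)
  | inr (inr (i, j)) => fmul (lX i) (lY j)
  end.

Definition rel (x : 'I_mB + Bindex) : poly :=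
  match x with
  | inl k => eX (rsB k)
  | inr y => fsub (Bterm y) (eX (preim (evg (Bterm y))))
  end.

Definition rels (r : 'I_#|{: 'I_mB + Bindex}|) : poly := rel (enum_val r).

Local Notation cong := (fcong rels).

Lemma rels_gen x : fideal rels (rel x).
Proof. by have := fideal_gen rels (enum_rank x); rewrite /rels enum_rankK. Qed.

Lemma fpoly_Bterm y : fpoly (Bterm y).
Proof.
by case: y => [k|[[j i]|[i j]]] /=; [exact: fpoly_eY | |]; apply: fpolyM; apply: fpoly_letter.
Qed.

Lemma B_evg_Bterm y : B (evg (Bterm y)).
Proof.
case: y => [k|[[j i]|[i j]]] /=.
- apply: (ideal_eqmod idealB (evg_eY (fpoly_rsQ k))).
  by apply/ker_g => //; exact: fideal_gen.
- rewrite evM ?ev_letter ?gens_lshift; try exact: fpoly_letter.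
  exact/(idealMl idealB)/B_f/fpoly_letter.
- rewrite evM ?ev_letter ?gens_lshift; try exact: fpoly_letter.
  exact/(idealMr idealB)/B_f/fpoly_letter.
Qed.

Lemma fpoly_rels r : fpoly (rels r).
Proof.
rewrite /rels; case: (enum_val r) => [k|y] /=; first exact: fpoly_eX.
by apply: fpolyB; [exact: fpoly_Bterm | apply/fpoly_eX; case: (preimP (B_evg_Bterm y))].
Qed.

Lemma evg_rel x : evg (rel x) = 0.
Proof.
case: x => [k|y] /=; first by rewrite evg_eX //; apply/ker_f => //; exact: fideal_gen.
have [Fp fp] := preimP (B_evg_Bterm y).
by rewrite evB ?evg_eX ?fp ?subrr //; [exact: fpoly_Bterm | exact: fpoly_eX].
Qed.

Lemma evg_fideal p : fideal rels p -> evg p = 0.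
Proof.
have F := fideal_fpoly fpoly_rels.
elim=> {p} [r||p q Ip IHp Iq IHq|c p Ip IHp|q p Fq Ip IHp|q p Fq Ip IHp].
- exact: evg_rel.
- exact: ev0.
- by rewrite evD ?IHp ?IHq ?addr0 //; apply: F.
- by rewrite evZ ?IHp ?scaler0 //; apply: F.
- by rewrite evM ?IHp ?kmul0r //; apply: F.
- by rewrite evM ?IHp ?kmul0l //; apply: F.
Qed.

Lemma evg_cong p q : fpoly p -> fpoly q -> cong p q -> evg p = evg q.
Proof.
by move=> Fp Fq /evg_fideal; rewrite evB // => /eqP; rewrite subr_eq0 => /eqP.
Qed.

Definition congX p := exists2 r, fpoly r & cong p (eX r).

Lemma congX_cong p q : cong p q -> congX q -> congX p.
Proof. by move=> pq [r Fr qr]; exists r => //; apply: fcong_trans qr. Qed.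

Lemma congX_eX r : fpoly r -> congX (eX r).
Proof. by exists r => //; apply: fcong_refl. Qed.

Lemma congX_Bterm y : congX (Bterm y).
Proof.
exists (preim (evg (Bterm y))); first by case: (preimP (B_evg_Bterm y)).
exact: (rels_gen (inr y)).
Qed.

Lemma congX0 : congX (@fzero K (n + m)).
Proof. by rewrite -(rename0 K (lshift m)); apply/congX_eX/fpoly0. Qed.

Lemma congXD p q : congX p -> congX q -> congX (fadd p q).
Proof.
move=> [r Fr pr] [r' Fr' qr']; exists (fadd r r'); first exact: fpolyD.
by rewrite renameD; apply: fcongD.
Qed.

Lemma congXZ c p : congX p -> congX (fscale c p).
Proof.
move=> [r Fr pr]; exists (fscale c r); first exact: fpolyZ.
by rewrite renameZ; apply: fcongZ.
Qed.

Lemma congX_XM i p : congX p -> congX (fmul (lX i) p).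
Proof.
move=> [r Fr pr]; apply: congX_cong (fcongMl (fpoly_letter _ _) pr) _.
have Fi := fpoly_letter K i.
by rewrite -eX_letter -eXM //; apply/congX_eX/fpolyM.
Qed.

Lemma congX_eXY r j : fpoly r -> congX (fmul (eX r) (lY j)).
Proof.
move=> Fr; elim/fpoly_ind: r / Fr.
- by rewrite rename0 fmul0l; exact: congX0.
- by move=> i; rewrite eX_letter; exact: (congX_Bterm (inr (inr (i, j)))).
- by move=> p q _ _; rewrite renameD fmulDl; exact: congXD.
- by move=> c p _; rewrite renameZ fmulZl; exact: congXZ.
move=> i p Fp IHp; have [p0 _] := fpoly_eX Fp.
by rewrite eXM ?eX_letter ?fmul_letterA //; [exact: congX_XM | exact: fpoly_letter].
Qed.

Lemma congX_eX_letter r z : fpoly r -> congX (fmul (eX r) (letter z)).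
Proof.
move=> Fr; case: (split_ordP z) => [i|j] ->; last exact: congX_eXY.
have Fi := fpoly_letter K i.
by rewrite -eX_letter -eXM //; apply/congX_eX/fpolyM.
Qed.

Lemma congXMr p q : fpoly q -> congX p -> congX (fmul p q).
Proof.
move=> Fq [r Fr /(fcongMr Fq)/congX_cong]; apply => {p}.
move: r Fr; elim/fpoly_ind: q / Fq => [r _|z r|p q _ _ IHp IHq r Fr|c p _ IHp r Fr|z q Fq IHq r Fr].
- by rewrite fmul0r; exact: congX0.
- exact: congX_eX_letter.
- by rewrite fmulDr; apply: congXD; [exact: IHp | exact: IHq].
- by rewrite fmulZr; apply/congXZ/IHp.
have [r' Fr' /(fcongMr Fq) rr'] := congX_eX_letter z Fr.
rewrite -fmulA //; last exact: fpoly_eX.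
exact: congX_cong rr' (IHq _ Fr').
Qed.

Lemma congX_YM j p : congX p -> congX (fmul (lY j) p).
Proof.
move=> [r Fr /(fcongMl (fpoly_letter _ _))/congX_cong]; apply => {p}.
elim/fpoly_ind: r / Fr.
- by rewrite rename0 fmul0r; exact: congX0.
- by move=> i; rewrite eX_letter; exact: (congX_Bterm (inr (inl (j, i)))).
- by move=> p q _ _; rewrite renameD fmulDr; exact: congXD.
- by move=> c p _; rewrite renameZ fmulZr; exact: congXZ.
move=> i p Fp _; have Fi := fpoly_letter K i.
rewrite eXM // eX_letter -fmul_letterA //.
exact: congXMr (fpoly_eX Fp) (congX_Bterm (inr (inl (j, i)))).
Qed.

Lemma congX_letterM z p : congX p -> congX (fmul (letter z) p).
Proof. by case: (split_ordP z) => [i|j] ->; [exact: congX_XM | exact: congX_YM]. Qed.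

Lemma congXMl q p : fpoly q -> congX p -> congX (fmul q p).
Proof.
move=> Fq Xp; elim/fpoly_ind: q / Fq.
- by rewrite fmul0l; exact: congX0.
- by move=> z; exact: congX_letterM.
- by move=> q1 q2 _ _ X1 X2; rewrite fmulDl; exact: congXD.
- by move=> c q _ Xq; rewrite fmulZl; exact: congXZ.
- by move=> z q [q0 _] Xq; rewrite fmul_letterA //; exact: congX_letterM.
Qed.

Lemma congX_sub_eY p : fpoly p -> exists2 pY, fpoly pY & congX (fsub p (eY pY)).
Proof.
move=> Fp; elim/fpoly_ind: p / Fp => [|z|p q _ _ [pY FpY Xp] [qY FqY Xq]|c p _ [pY FpY Xp]|z p Fp [pY FpY Xp]].
- by exists (@fzero K m); rewrite ?rename0 ?fsubrr; [exact: fpoly0 | exact: congX0].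
- case: (split_ordP z) => [i|j] ->.
    exists (@fzero K m); first exact: fpoly0.
    by rewrite rename0 fsubr0 -eX_letter; apply/congX_eX/fpoly_letter.
  exists (letter j); first exact: fpoly_letter.
  by rewrite eY_letter fsubrr; exact: congX0.
- exists (fadd pY qY); first exact: fpolyD.
  by rewrite renameD fsubD; exact: congXD.
- exists (fscale c pY); first exact: fpolyZ.
  by rewrite renameZ fsubZ; exact: congXZ.
case: (split_ordP z) => [i|j] ->.
  exists (@fzero K m); first exact: fpoly0.
  rewrite rename0 fsubr0 -(fsubrK p (eY pY)) fmulDr.
  apply: congXD; first exact: congX_XM.
  by apply: congXMr (fpoly_eY FpY) _; rewrite -eX_letter; apply/congX_eX/fpoly_letter.
exists (fmul (letter j) pY); first exact: fpoly_letterM.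
by rewrite eYM ?eY_letter -?fmulBr; [exact: congX_YM | exact: fpoly_letter |].
Qed.

Lemma congX_eY_fideal q : fideal rsQ q -> congX (eY q).
Proof.
have F := fideal_fpoly fpoly_rsQ.
elim=> {q} [k||p q _ Xp _ Xq|c p _ Xp|q p Fq Ip Xp|q p Fq Ip Xp].
- exact: (congX_Bterm (inl k)).
- by rewrite rename0; exact: congX0.
- by rewrite renameD; exact: congXD.
- by rewrite renameZ; exact: congXZ.
- by rewrite eYM //; [exact: congXMl (fpoly_eY Fq) Xp | exact: F Ip].
- by rewrite eYM //; [exact: congXMr (fpoly_eY Fq) Xp | exact: F Ip].
Qed.

Lemma congX_evgB p : fpoly p -> B (evg p) -> congX p.
Proof.
move=> Fp Bp; have [pY FpY XppY] := congX_sub_eY Fp; have [r Fr pYr] := XppY.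
have FYpY := fpoly_eY FpY.
have evg_pY : evg (eY pY) = evg p - f r.
  rewrite -(evg_eX Fr) -(evg_cong (fpolyB Fp FYpY) (fpoly_eX Fr) pYr) evB //.
  by rewrite opprB addrC subrK.
have /(ker_g FpY)/congX_eY_fideal XpY : B (g pY).
  apply: (ideal_eqmod idealB (eqmod_sym idealB (evg_eY FpY))).
  by rewrite evg_pY; apply: (idealD idealB Bp); exact/(idealN idealB)/B_f.
by rewrite -(fsubrK p (eY pY)); exact: congXD XppY XpY.
Qed.

Lemma fideal_eX q : fideal rsB q -> fideal rels (eX q).
Proof.
have F := fideal_fpoly fpoly_rsB.
elim=> {q} [k||p q _ Ip _ Iq|c p _ Ip|q p Fq Ip IHp|q p Fq Ip IHp].
- exact: (rels_gen (inl k)).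
- by rewrite rename0; exact: fideal_zero.
- by rewrite renameD; exact: fideal_add.
- by rewrite renameZ; exact: fideal_scale.
- by rewrite eXM //; [exact: fideal_mull (fpoly_eX Fq) IHp | exact: F Ip].
- by rewrite eXM //; [exact: fideal_mulr (fpoly_eX Fq) IHp | exact: F Ip].
Qed.

Lemma evg_ker p : fpoly p -> (kzero (evg p) <-> fideal rels p).
Proof.
move=> Fp; split; last exact: evg_fideal.
rewrite /kzero => evg_p0.
have [r Fr pr] : congX p by apply: congX_evgB => //; rewrite evg_p0; exact: ideal0.
have /(ker_f Fr)/fideal_eX/fcong0 : kzero (f r).
  by rewrite /kzero -evg_eX // -(evg_cong Fp (fpoly_eX Fr) pr).
by move/(fcong_trans pr)/fcong0.
Qed.

End Presentation.
End Extension.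

Theorem lemma2p2 (K : comPzRingType) (A : kalgType K) (B : A -> Prop) :
  is_ideal B ->
  (ideal_fin_gen B -> quot_fin_gen B -> fin_gen A) /\
  (ideal_fin_pres B -> quot_fin_pres B -> fin_pres A).
Proof.
move=> idealB; split.
- move=> [n [f f_onto]] [m [g g_onto]].
  by exists (n + m), (ev (gens f g)); apply: evg_fhom_onto f_onto g_onto.
- move=> [n [f [f_onto [mB [rsB [FrsB ker_f]]]]]] [m [g [g_onto [mQ [rsQ [FrsQ ker_g]]]]]].
  exists (n + m), (ev (gens f g)); split; first exact: (evg_fhom_onto idealB).
  exists _, (rels f g rsB rsQ); split.
    exact: (fpoly_rels idealB f_onto g_onto FrsB FrsQ ker_g).
  exact: (evg_ker idealB f_onto g_onto FrsB FrsQ ker_f ker_g).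
Qed.
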